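(* Let $\boldsymbol{W}=(w_{ir})\in\mathbb{R}^{n\times n}$ be nonnegative, primitive and doubly stochastic, with $\lambda:=\|\boldsymbol{W}-\mathbf{1}_n\mathbf{1}_n^\top/n\|_2<1$. For any realization of the iterates of GT-NSGDm (described in the context) with step size $\alpha>0$, and $\bar{\boldsymbol{x}}^t=\frac1n\sum_i\boldsymbol{x}_i^t$, we have for all $t=0,\dots,T$: $$\frac1n\sum_{i=1}^n\|\boldsymbol{x}_i^t-\bar{\boldsymbol{x}}^t\|\le\frac{\alpha\lambda}{1-\lambda}.$$
   Context: Algorithm GT-NSGDm (run in parallel at every node $i$, with local functions $f_i$ and stochastic gradients $\boldsymbol{g}_i(\boldsymbol{x},\boldsymbol{\xi})$): initialize $\boldsymbol{x}_i^{-1}=\boldsymbol{x}_i^0=\bar{\boldsymbol{x}}^0$ (a common point) and $\boldsymbol{v}_i^{-1}=\boldsymbol{y}_i^{-1}=\mathbf{0}_d$. For $t=0,\dots,T-1$: sample $\boldsymbol{\xi}_i^t$; set $\boldsymbol{v}_i^t=\beta\boldsymbol{v}_i^{t-1}+(1-\beta)\boldsymbol{g}_i(\boldsymbol{x}_i^t,\boldsymbol{\xi}_i^t)$; $\boldsymbol{y}_i^t=\sum_{r=1}^n w_{ir}(\boldsymbol{y}_r^{t-1}+\boldsymbol{v}_r^t-\boldsymbol{v}_r^{t-1})$; $\boldsymbol{x}_i^{t+1}=\sum_{r=1}^n w_{ir}\big(\boldsymbol{x}_r^t-\alpha\,\boldsymbol{y}_r^t/\|\boldsymbol{y}_r^t\|\big)$.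 *)

From HB Require Import structures.
From mathcomp Require Import all_boot all_order all_algebra.
From mathcomp Require Import boolp classical_sets reals.
Set Implicit Arguments. Unset Strict Implicit. Unset Printing Implicit Defensive.
Import Order.TTheory GRing.Theory Num.Theory.
Local Open Scope ring_scope.
Local Open Scope classical_set_scope.

Section Defs.
Variable R : realType.

Definition fnorm (m k : nat) (A : 'M[R]_(m, k)) : R :=
  Num.sqrt (\sum_(i < m) \sum_(j < k) A i j ^+ 2).

Definition specnorm (m k : nat) (A : 'M[R]_(m, k)) : R :=
  sup [set r : R | exists v : 'cV[R]_k, fnorm v <= 1 /\ r = fnorm (A *m v)].

Definition mxpow (n : nat) (W : 'M[R]_n) (k : nat) : 'M[R]_n :=
  iter k (mulmx W) 1%:M.

Definition nonneg_mx (n : nat) (W : 'M[R]_n) : Prop :=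
  forall i j, 0 <= W i j.

Definition doubly_stochastic (n : nat) (W : 'M[R]_n) : Prop :=
  nonneg_mx W /\
  (forall i, \sum_(j < n) W i j = 1) /\
  (forall j, \sum_(i < n) W i j = 1).

Definition primitive_mx (n : nat) (W : 'M[R]_n) : Prop :=
  exists k : nat, forall i j, 0 < mxpow W k i j.

Definition avg_mx (n : nat) : 'M[R]_n := n%:R^-1 *: const_mx 1.

End Defs.

From HB Require Import structures.
From mathcomp Require Import all_boot all_order all_algebra.
From mathcomp Require Import boolp classical_sets reals.
From mathcomp Require Import ring lra.
Import Order.TTheory GRing.Theory Num.Theory.
Set Implicit Arguments. Unset Strict Implicit.
Local Open Scope ring_scope.

(** Let [E t] be the Frobenius norm of [(I - J) X^t], the stacked deviations
    from the average.  Double stochasticity gives [(I - J) W = W - J] and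
    [(W - J) J = 0], hence
    [(I - J) X^(t+1) = (I - J) W (X^t - U^t) = (W - J) ((I - J) X^t - U^t)],
    where the rows of [U^t] are the normalised steps [alpha y / |y|], each of
    norm at most [alpha] (also when [y = 0], since then [alpha / 0 = 0]).
    So [E (t+1) <= lambda (E t + alpha sqrt n)] with [E 0 = 0], whence
    [E t <= lambda alpha sqrt n / (1 - lambda)], and Cauchy-Schwarz bounds the
    average row norm by [E t / sqrt n]. *)

Section FrobeniusNorm.
Variable R : realType.

Lemma sum_sqr_ge0 (I : finType) (a : I -> R) : 0 <= \sum_i a i ^+ 2.
Proof. by rewrite sumr_ge0 // => i _; exact: sqr_ge0. Qed.

Lemma cauchy_schwarz (I : finType) (a b : I -> R) :
  (\sum_i a i * b i) ^+ 2 <= (\sum_i a i ^+ 2) * (\sum_i b i ^+ 2).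
Proof.
set A := \sum_i a i ^+ 2; set B := \sum_i b i ^+ 2; set C := \sum_i a i * b i.
have B_ge0 : 0 <= B := sum_sqr_ge0 b.
have lagrange : B * (A * B - C ^+ 2) = \sum_i (B * a i - C * b i) ^+ 2.
  rewrite (eq_bigr (fun i => B ^+ 2 * a i ^+ 2 - 2 * B * C * (a i * b i)
                             + C ^+ 2 * b i ^+ 2)); last by move=> i _; ring.
  by rewrite !big_split sumrN /= -!mulr_sumr -/A -/B -/C; ring.
have [B0|B_neq0] := eqVneq B 0.
  have b0 i : b i = 0.
    apply/eqP; rewrite -sqrf_eq0; apply/eqP.
    by apply: (psumr_eq0P (P := predT) (F := fun j => b j ^+ 2)) => // j _; exact: sqr_ge0.
  rewrite B0 mulr0 /C big1 ?expr0n // => i _.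
  by rewrite b0 mulr0.
have B_gt0 : 0 < B by rewrite lt_def B_neq0.
by rewrite -subr_ge0 -(pmulr_rge0 _ B_gt0) lagrange sum_sqr_ge0.
Qed.

Lemma sum_mul_le_sqrt (I : finType) (a b : I -> R) :
  \sum_i a i * b i <= Num.sqrt (\sum_i a i ^+ 2) * Num.sqrt (\sum_i b i ^+ 2).
Proof.
rewrite -sqrtrM ?sum_sqr_ge0 //; apply: le_trans (ler_norm _) _.
by rewrite -sqrtr_sqr ler_sqrt ?cauchy_schwarz // mulr_ge0 ?sum_sqr_ge0.
Qed.

Lemma fnorm_ge0 m k (A : 'M[R]_(m, k)) : 0 <= fnorm A.
Proof. exact: sqrtr_ge0. Qed.

Lemma fnorm_le_sqr m k (A : 'M[R]_(m, k)) c :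
  0 <= c -> (fnorm A <= c) = (fnorm A ^+ 2 <= c ^+ 2).
Proof. by move=> c_ge0; rewrite ler_sqr ?nnegrE ?fnorm_ge0. Qed.

Lemma fnorm_sqr m k (A : 'M[R]_(m, k)) :
  fnorm A ^+ 2 = \sum_i \sum_j A i j ^+ 2.
Proof. by rewrite sqr_sqrtr // sumr_ge0 // => i _; exact: sum_sqr_ge0. Qed.

Lemma fnorm_pair m k (A : 'M[R]_(m, k)) :
  fnorm A = Num.sqrt (\sum_(ij : 'I_m * 'I_k) A ij.1 ij.2 ^+ 2).
Proof. by rewrite /fnorm pair_big. Qed.

Lemma fnormD m k (A B : 'M[R]_(m, k)) : fnorm (A + B) <= fnorm A + fnorm B.
Proof.
have := sum_mul_le_sqrt (fun ij => A ij.1 ij.2) (fun ij => B ij.1 ij.2).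
rewrite -!fnorm_pair => AB_le.
rewrite fnorm_le_sqr ?addr_ge0 ?fnorm_ge0 // sqrrD !fnorm_sqr !pair_big /=.
rewrite (eq_bigr (fun ij => A ij.1 ij.2 ^+ 2 + B ij.1 ij.2 ^+ 2
                            + 2 * (A ij.1 ij.2 * B ij.1 ij.2))); last first.
  by move=> ij _; rewrite mxE; ring.
rewrite !big_split /= -mulr_sumr; lra.
Qed.

Lemma fnormZ m k (c : R) (A : 'M[R]_(m, k)) : fnorm (c *: A) = `|c| * fnorm A.
Proof.
rewrite /fnorm -sqrtr_sqr -sqrtrM ?sqr_ge0 // mulr_sumr; congr Num.sqrt.
by apply: eq_bigr => i _; rewrite mulr_sumr; apply: eq_bigr => j _; rewrite mxE exprMn.
Qed.

Lemma fnorm0 m k : fnorm (0 : 'M[R]_(m, k)) = 0.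
Proof. by rewrite -(scale0r (0 : 'M[R]_(m, k))) fnormZ normr0 mul0r. Qed.

Lemma fnormN m k (A : 'M[R]_(m, k)) : fnorm (- A) = fnorm A.
Proof. by rewrite -scaleN1r fnormZ normrN1 mul1r. Qed.

Lemma fnormB m k (A B : 'M[R]_(m, k)) : fnorm (A - B) <= fnorm A + fnorm B.
Proof. by rewrite -(fnormN B) fnormD. Qed.

Lemma fnorm_row k (v : 'rV[R]_k) : fnorm v ^+ 2 = \sum_j v 0 j ^+ 2.
Proof. by rewrite fnorm_sqr big_ord1. Qed.

Lemma fnorm_rows m k (A : 'M[R]_(m, k)) :
  fnorm A ^+ 2 = \sum_i fnorm (row i A) ^+ 2.
Proof.
rewrite fnorm_sqr; apply: eq_bigr => i _; rewrite fnorm_row.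
by apply: eq_bigr => j _; rewrite mxE.
Qed.

Lemma fnorm_cols m k (A : 'M[R]_(m, k)) :
  fnorm A ^+ 2 = \sum_j fnorm (col j A) ^+ 2.
Proof.
rewrite fnorm_sqr exchange_big; apply: eq_bigr => j _.
by rewrite fnorm_sqr; apply: eq_bigr => i _; rewrite big_ord1 mxE.
Qed.

Lemma fnorm_mulmx m k p (A : 'M[R]_(m, k)) (B : 'M[R]_(k, p)) :
  fnorm (A *m B) <= fnorm A * fnorm B.
Proof.
rewrite fnorm_le_sqr ?mulr_ge0 ?fnorm_ge0 // exprMn !fnorm_sqr mulr_suml.
apply: ler_sum => i _; rewrite [X in _ * X]exchange_big mulr_sumr.
apply: ler_sum => j _; rewrite mxE.
exact: (cauchy_schwarz (fun l => A i l) (fun l => B l j)).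
Qed.

Lemma fnorm_rows_le m k (A : 'M[R]_(m, k)) c :
  0 <= c -> (forall i, fnorm (row i A) <= c) -> fnorm A <= c * Num.sqrt m%:R.
Proof.
move=> c_ge0 A_le; rewrite fnorm_le_sqr ?mulr_ge0 ?sqrtr_ge0 // fnorm_rows exprMn sqr_sqrtr //.
rewrite mulr_natr -[in c ^+ 2 *+ m](card_ord m) -sumr_const.
by apply: ler_sum => i _; rewrite ler_sqr ?nnegrE ?fnorm_ge0.
Qed.

Lemma sum_fnorm_rows_le m k (A : 'M[R]_(m, k)) :
  \sum_i fnorm (row i A) <= Num.sqrt m%:R * fnorm A.
Proof.
have := sum_mul_le_sqrt (fun _ : 'I_m => 1) (fun i => fnorm (row i A)).
rewrite -fnorm_rows sqrtr_sqr ger0_norm ?fnorm_ge0 // sumr_const card_ord.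
by under eq_bigr do rewrite mul1r; rewrite expr1n.
Qed.

Lemma mean_fnorm_rows_le m k (A : 'M[R]_(m, k)) c :
  0 <= c -> fnorm A <= c * Num.sqrt m%:R -> m%:R^-1 * \sum_i fnorm (row i A) <= c.
Proof.
move=> c_ge0 A_le.
apply: (le_trans (y := m%:R^-1 * (Num.sqrt m%:R * (c * Num.sqrt m%:R)))).
  rewrite ler_wpM2l ?invr_ge0 ?ler0n // (le_trans (sum_fnorm_rows_le A)) //.
  by rewrite ler_wpM2l ?sqrtr_ge0.
rewrite (_ : _ * _ = m%:R^-1 * Num.sqrt m%:R ^+ 2 * c); last by ring.
rewrite sqr_sqrtr ?ler0n // ler_piMl //.
by have [->|m_neq0] := eqVneq (m%:R : R) 0; rewrite ?mulr0 ?ler01 ?mulVf.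
Qed.

Lemma specnorm_ubound m k (A : 'M[R]_(m, k)) :
  ubound [set r : R | exists v : 'cV[R]_k, fnorm v <= 1 /\ r = fnorm (A *m v)]
         (specnorm A).
Proof.
apply: ub_le_sup; exists (fnorm A) => _ [v [v_le1 ->]].
apply: le_trans (fnorm_mulmx A v) _.
by rewrite -[leRHS]mulr1 ler_wpM2l ?fnorm_ge0.
Qed.

Lemma specnorm_ge0 m k (A : 'M[R]_(m, k)) : 0 <= specnorm A.
Proof.
by apply: specnorm_ubound; exists 0; rewrite mulmx0 !fnorm0 ler01.
Qed.

Lemma specnorm_mulmx_cV m k (A : 'M[R]_(m, k)) (v : 'cV[R]_k) :
  fnorm (A *m v) <= specnorm A * fnorm v.
Proof.
have [v0|v_neq0] := eqVneq (fnorm v) 0.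
  by have := fnorm_mulmx A v; rewrite v0 !mulr0.
have v_gt0 : 0 < fnorm v by rewrite lt_def v_neq0 fnorm_ge0.
have : fnorm (A *m ((fnorm v)^-1 *: v)) <= specnorm A.
  apply: specnorm_ubound; exists ((fnorm v)^-1 *: v).
  by rewrite fnormZ ger0_norm ?invr_ge0 ?fnorm_ge0 // mulVf.
rewrite -scalemxAr fnormZ ger0_norm ?invr_ge0 ?fnorm_ge0 //.
by rewrite mulrC -ler_pdivlMr ?invr_gt0 // invrK.
Qed.

Lemma specnorm_mulmx m k p (A : 'M[R]_(m, k)) (B : 'M[R]_(k, p)) :
  fnorm (A *m B) <= specnorm A * fnorm B.
Proof.
rewrite fnorm_le_sqr ?mulr_ge0 ?fnorm_ge0 ?specnorm_ge0 // exprMn !fnorm_cols mulr_sumr.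
apply: ler_sum => j _; rewrite -exprMn ler_sqr ?nnegrE ?fnorm_ge0 //; last first.
  by rewrite mulr_ge0 ?fnorm_ge0 ?specnorm_ge0.
by rewrite !colE -mulmxA specnorm_mulmx_cV.
Qed.

Lemma fnorm_normalize_le m k (a : R) (A : 'M[R]_(m, k)) :
  0 <= a -> fnorm ((a / fnorm A) *: A) <= a.
Proof.
move=> a_ge0; rewrite fnormZ normrM ger0_norm // normfV ger0_norm ?fnorm_ge0 //.
have [->|A_neq0] := eqVneq (fnorm A) 0; first by rewrite invr0 !mulr0.
by rewrite -mulrA mulVf ?mulr1.
Qed.

End FrobeniusNorm.

Lemma affine_contraction_le (R : realType) (e : nat -> R) (lam c : R) (T : nat) :
  0 <= lam < 1 -> e 0%N <= lam * c / (1 - lam) ->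
  (forall t, (t < T)%N -> e t.+1 <= lam * (e t + c)) ->
  forall t, (t <= T)%N -> e t <= lam * c / (1 - lam).
Proof.
move=> /andP[lam_ge0 lam_lt1] e0_le e_step; elim=> [//|t IH] t_lt.
apply: le_trans (e_step t t_lt) _.
have -> : lam * c / (1 - lam) = lam * (lam * c / (1 - lam) + c).
  by field; rewrite subr_eq0 gt_eqF.
by rewrite ler_wpM2l // lerD2r IH // ltnW.
Qed.

Section Consensus.
Variables (R : realType) (n : nat).
Local Notation J := (avg_mx R n).

Lemma avg_mxE i j : J i j = n%:R^-1.
Proof. by rewrite !mxE mulr1. Qed.

Lemma ord_natr_neq0 (i : 'I_n) : n%:R != 0 :> R.
Proof. by rewrite pnatr_eq0 -lt0n (leq_ltn_trans _ (ltn_ord i)). Qed.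

Lemma row_consensus k (M : 'M[R]_(n, k)) i :
  row i ((1%:M - J) *m M) = row i M - n%:R^-1 *: \sum_r row r M.
Proof.
rewrite mulmxBl mul1mx linearB /= row_mul mulmx_sum_row scaler_sumr.
by congr (_ - _); apply: eq_bigr => r _; rewrite mxE avg_mxE.
Qed.

Lemma consensus_const k (x : 'rV[R]_k) : (1%:M - J) *m \matrix_(i < n) x = 0.
Proof.
apply/row_matrixP => i; rewrite row_consensus row0 rowK.
under eq_bigr do rewrite rowK.
by rewrite sumr_const card_ord -scaler_nat scalerA mulVf ?(ord_natr_neq0 i) // scale1r subrr.
Qed.

Lemma mulmx_avg_mx (A : 'M[R]_n) : (forall i, \sum_j A i j = 1) -> A *m J = J.
Proof.
move=> A_row; apply/matrixP => i j; rewrite mxE avg_mxE.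
under eq_bigr do rewrite avg_mxE.
by rewrite -mulr_suml A_row mul1r.
Qed.

Lemma avg_mx_mulmx (A : 'M[R]_n) : (forall j, \sum_i A i j = 1) -> J *m A = J.
Proof.
move=> A_col; apply/matrixP => i j; rewrite mxE avg_mxE.
under eq_bigr do rewrite avg_mxE.
by rewrite -mulr_sumr A_col mulr1.
Qed.

Lemma avg_mx_idem : J *m J = J.
Proof.
apply: mulmx_avg_mx => i; under eq_bigr do rewrite avg_mxE.
by rewrite sumr_const card_ord -(mulr_natr n%:R^-1) mulVf ?(ord_natr_neq0 i).
Qed.

Variable W : 'M[R]_n.
Hypotheses (W_row : forall i, \sum_j W i j = 1) (W_col : forall j, \sum_i W i j = 1).

Lemma consensus_mulmx : (1%:M - J) *m W = W - J.
Proof. by rewrite mulmxBl mul1mx avg_mx_mulmx. Qed.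

Lemma mulmx_consensus : (W - J) *m (1%:M - J) = W - J.
Proof. by rewrite mulmxBr mulmx1 mulmxBl mulmx_avg_mx // avg_mx_idem subrr subr0. Qed.

Lemma consensus_error_step k (X U : 'M[R]_(n, k)) :
  fnorm ((1%:M - J) *m (W *m (X - U)))
    <= specnorm (W - J) * (fnorm ((1%:M - J) *m X) + fnorm U).
Proof.
have -> : (1%:M - J) *m (W *m (X - U)) = (W - J) *m ((1%:M - J) *m X - U).
  by rewrite mulmxA consensus_mulmx !mulmxBr mulmxA mulmx_consensus.
apply: le_trans (specnorm_mulmx _ _) _.
by rewrite ler_wpM2l ?specnorm_ge0 ?fnormB.
Qed.

End Consensus.

(* X t i = x_i^t ; V t i = v_i^{t-1} (V 0 = v^{-1} = 0) ; Y t i = y_i^{t-1} (Y 0 = y^{-1} = 0). *)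
Theorem lemma4 (R : realType) (n d T : nat) (W : 'M[R]_n)
  (alpha beta : R) (Xi : Type)
  (g : 'I_n -> 'rV[R]_d -> Xi -> 'rV[R]_d) (xi : nat -> 'I_n -> Xi)
  (x0 : 'rV[R]_d)
  (X V Y : nat -> 'I_n -> 'rV[R]_d) :
  doubly_stochastic W -> primitive_mx W ->
  specnorm (W - avg_mx R n) < 1 ->
  0 < alpha ->
  (forall i, X 0%N i = x0) ->
  (forall i, V 0%N i = 0) ->
  (forall i, Y 0%N i = 0) ->
  (forall t i, (t < T)%N ->
     V t.+1 i = beta *: V t i + (1 - beta) *: g i (X t i) (xi t i)) ->
  (forall t i, (t < T)%N ->
     Y t.+1 i = \sum_(r < n) W i r *: (Y t r + V t.+1 r - V t r)) ->
  (forall t i, (t < T)%N ->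
     X t.+1 i = \sum_(r < n) W i r *:
                  (X t r - (alpha / fnorm (Y t.+1 r)) *: Y t.+1 r)) ->
  forall t, (t <= T)%N ->
    n%:R^-1 * \sum_(i < n) fnorm (X t i - n%:R^-1 *: \sum_(r < n) X t r)
      <= alpha * specnorm (W - avg_mx R n) / (1 - specnorm (W - avg_mx R n)).
Proof.
move=> [_ [W_row W_col]] _ lam_lt1 alpha_gt0 X0 _ _ _ _ X_step.
set J := avg_mx R n; set lam := specnorm (W - J).
have lam_ge0 : 0 <= lam := specnorm_ge0 _.
have alpha_ge0 : 0 <= alpha := ltW alpha_gt0.
pose Xm t : 'M[R]_(n, d) := \matrix_i X t i.
pose e t := fnorm ((1%:M - J) *m Xm t).
have e0 : e 0%N = 0.
  suff Xm0 : Xm 0%N = \matrix_(i < n) x0 by rewrite /e Xm0 consensus_const fnorm0.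
  by apply/row_matrixP => i; rewrite !rowK X0.
have e_step t : (t < T)%N -> e t.+1 <= lam * (e t + alpha * Num.sqrt n%:R).
  move=> t_lt; pose U := \matrix_r ((alpha / fnorm (Y t.+1 r)) *: Y t.+1 r).
  rewrite /e; have -> : Xm t.+1 = W *m (Xm t - U).
    apply/row_matrixP => i; rewrite rowK X_step // row_mul mulmx_sum_row.
    by apply: eq_bigr => r _; rewrite mxE [row r _]linearB /= !rowK scalerBr.
  apply: le_trans (consensus_error_step W_row W_col _ _) _.
  rewrite ler_wpM2l // lerD2l; apply: fnorm_rows_le => // r.
  by rewrite rowK fnorm_normalize_le.
have row_Xm t i : row i ((1%:M - J) *m Xm t) = X t i - n%:R^-1 *: \sum_r X t r.
  by rewrite row_consensus rowK; under eq_bigr do rewrite rowK.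
move=> t t_le; under eq_bigr do rewrite -row_Xm.
apply: mean_fnorm_rows_le; first by rewrite divr_ge0 ?mulr_ge0 ?subr_ge0 ?(ltW lam_lt1).
rewrite (_ : alpha * lam / (1 - lam) * Num.sqrt n%:R
             = lam * (alpha * Num.sqrt n%:R) / (1 - lam)); last by ring.
apply: (affine_contraction_le _ _ e_step t_le); first by rewrite lam_ge0.
by rewrite e0 divr_ge0 ?mulr_ge0 ?sqrtr_ge0 ?subr_ge0 ?(ltW lam_lt1).
Qed.
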